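(* Consider the repeated single-slot hybrid auction in which at each step $t$ each advertiser $j$ bids $(m_{jt},c_{jt})$, the auctioneer's index is $q_{jt}$, the effective bid is $R_{jt}=\max(m_{jt},c_{jt}q_{jt})$, the highest effective bid wins and pays (with $R_{-j}$ the highest competing effective bid) $R_{-j}$ per impression if $m_{jt}>c_{jt}q_{jt}$ and $R_{-j}/q_{jt}$ per click otherwise. Advertiser $j$ has per-click value $v_j$, and the advertiser and auctioneer share the same Bayes-updated prior $\mathcal{P}_{jt}=\mathcal{Q}_{jt}$ on $j$'s click-through rate, with mean $p_{jt}$; the auctioneer's index $q_{jt}$ is the Gittins index of $\mathcal{Q}_{jt}$ with discount factor $\gamma_a$. Each advertiser uses the bidding index strategy with discount factor $\gamma_b$: at each step it bids $(B_{jt},B_{jt}/p_{jt})$, where $B_{jt}=\mathcal{W}_{jt}\min(1,p_{jt}/q_{jt})$ and $\mathcal{W}_{jt}$ is the largest $W$ such that the following game has positive optimal expected $\gamma_b$-discounted value: starting from the current priors, at each step the advertiser may stop or continue, and if it continues it gains $v_jp_s-W\min(1,p_s/q_s)$ in expectation (with $p_s,q_s$ the current mean and auctioneer index), after which both priors are Bayes-updated with the click outcome. Let $\gamma\in[0,1)$ be a global discount factor, let $G_{jt}$ denote the Gittins index of $\mathcal{P}_{jt}$ with discount factor $\gamma$, and call socially optimal the allocation rule maximizing the infinite-horizon expected $\gamma$-discounted sum of $v_jp_{jt}$ over the advertisers $j$ receiving the impression at each step $t$, which gives the impression at each step to an advertiser with the highest $v_jG_{jt}$. Then the bidding index strategy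 implements the socially optimal solution (each advertiser's effective bid equals $v_jG_{jt}$) in each of the following two cases: (1) $\gamma_b=\gamma$ and $\gamma_a=0$; (2) $\gamma_b=0$ and $\gamma_a=\gamma$.
   Context: Gittins index of a prior $\mathcal{Q}$ with discount factor $\gamma$: for a coin whose head probability has prior $\mathcal{Q}$ (Bayes-updated after each toss), yielding reward $1$ on heads and charged $G$ per toss, with the option to retire at any time, it is the largest $G$ for which the optimal expected $\gamma$-discounted difference between rewards and charges is non-negative. It equals the mean when $\gamma=0$ and is at least the mean in general. *)

From HB Require Import structures.
From mathcomp Require Import all_boot all_order all_algebra.
From mathcomp Require Import all_classical all_reals all_analysis.
Set Implicit Arguments. Unset Strict Implicit. Unset Printing Implicit Defensive.
Import Order.TTheory GRing.Theory Num.Theory.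
Import numFieldNormedType.Exports.
Local Open Scope classical_set_scope.
Local Open Scope ring_scope.

Section Bayes.
Context {R : realType}.

(* A prior on a click-through rate: a probability measure on the reals
   (Borel) giving full mass to [0,1].  The posterior after observing
   k clicks and m non-clicks is the measure x^k (1-x)^m dP, normalised.
   We represent the Bayes-updated prior by the pair of counts (k, m). *)

Definition mom (P : probability R R) (k m : nat) : R :=
  fine (\int[P]_(x in `[0, 1]) ((x ^+ k * (1 - x) ^+ m)%:E)).

Definition pmean (P : probability R R) (k m : nat) : R :=
  mom P k.+1 m / mom P k m.

(* A (history-dependent) stopping rule: given the (reversed) list of
   outcomes observed so far (true = click), decide whether to stop. *)
Definition stop_rule := seq bool -> bool.

Fixpoint trunc_value (P : probability R R) (g : R) (r : nat -> nat -> R)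
   (sigma : stop_rule) (k0 m0 : nat) (n : nat) (h : seq bool) : R :=
  match n with
  | 0 => 0
  | n'.+1 =>
    let k := (k0 + count id h)%N in
    let m := (m0 + count negb h)%N in
    if sigma h then 0 else
    r k m + g * (pmean P k m * trunc_value P g r sigma k0 m0 n' (true :: h)
               + (1 - pmean P k m) * trunc_value P g r sigma k0 m0 n' (false :: h))
  end.

Definition rule_value P g r sigma k0 m0 : R :=
  limn (fun n => trunc_value P g r sigma k0 m0 n [::]).

Definition opt_value P g r k0 m0 : R :=
  sup [set rule_value P g r sigma k0 m0 | sigma in [set: stop_rule]].

Definition opt_value_play P g r k0 m0 : R :=
  sup [set rule_value P g r sigma k0 m0 | sigma in [set s : stop_rule | s [::] = false]].

Definition gittins P g k m : R :=
  sup [set G : R | 0 <= opt_value_play P g (fun k' m' => pmean P k' m' - G) k m].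

Definition bid_index P (v gb ga : R) k m : R :=
  sup [set W : R | 0 < opt_value P gb
        (fun k' m' => v * pmean P k' m'
            - W * Num.min 1 (pmean P k' m' / gittins P ga k' m')) k m].

Definition bid_impr P v gb ga k m : R :=
  bid_index P v gb ga k m * Num.min 1 (pmean P k m / gittins P ga k m).
Definition bid_click P v gb ga k m : R := bid_impr P v gb ga k m / pmean P k m.

Definition eff_bid P v gb ga k m : R :=
  Num.max (bid_impr P v gb ga k m) (bid_click P v gb ga k m * gittins P ga k m).

End Bayes.

From HB Require Import structures.
From mathcomp Require Import all_boot all_order all_algebra.
From mathcomp Require Import all_classical all_reals all_analysis.
From mathcomp Require Import measurable_realfun.
From mathcomp Require Import ring lra.
Import Order.TTheory GRing.Theory Num.Theory.
Import numFieldNormedType.Exports.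
Local Open Scope classical_set_scope.
Local Open Scope ring_scope.

(* When the auctioneer is myopic (ga = 0) its index is the mean p, so the bid
   is the bidding index W itself and the bidder's game pays
   v p - W = v (p - W / v) on every state with p > 0: up to the factor v it is
   the Gittins game with charge W / v, whence W = v G.  States with p = 0 pay
   nothing and, along the only branch of positive probability, stay null, so
   they can be cut off.  When the bidder is myopic (gb = 0) its game lasts one
   step, so W = v q with q the Gittins index, and the effective bid
   max(v p, v q) is v q because q >= p. *)

Section Moments.
Context {R : realType} (P : probability R R).

Lemma moment_integrand_ge0 k m (x : R) : 0 <= x <= 1 -> 0 <= x ^+ k * (1 - x) ^+ m.
Proof. by move=> /andP[x0 x1]; rewrite mulr_ge0 // exprn_ge0 // subr_ge0. Qed.

Lemma measurable_moment_integrand k m :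
  measurable_fun (`[0%R, 1%R] : set R) (EFin \o (fun x : R => x ^+ k * (1 - x) ^+ m)).
Proof.
apply/measurable_EFinP; apply: measurable_funM; apply: measurable_funX => //.
exact: measurable_funB.
Qed.

Lemma moment_integral_bounds k m :
  (0 <= \int[P]_(x in (`[0%R, 1%R] : set R)) (x ^+ k * (1 - x) ^+ m)%:E <= 1)%E.
Proof.
have in01 x : (`[0%R, 1%R]%classic : set R) x -> 0 <= x <= 1 by rewrite /= in_itv.
rewrite integral_ge0 => [|x /in01 x01]; last by rewrite lee_fin moment_integrand_ge0.
apply: (@le_trans _ _ (\int[P]_(x in (`[0%R, 1%R] : set R)) (cst 1%:E) x)%E).
  apply: ge0_le_integral => //.
  - by move=> x /in01 x01; rewrite lee_fin moment_integrand_ge0.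
  - exact: measurable_moment_integrand.
  move=> x /in01 /andP[x0 x1]; rewrite lee_fin mulr_ile1 ?exprn_ge0 ?exprn_ile1 //;
    by rewrite ?subr_ge0 // lerBlDr lerDl.
by rewrite integral_cst // mul1e probability_le1.
Qed.

Lemma moment_integral_fin_num k m :
  (\int[P]_(x in (`[0%R, 1%R] : set R)) (x ^+ k * (1 - x) ^+ m)%:E \is a fin_num)%E.
Proof.
have /andP[ge0 le1] := moment_integral_bounds k m.
by rewrite ge0_fin_numE // (le_lt_trans le1) // ltry.
Qed.

Lemma mom_ge0 k m : 0 <= mom P k m.
Proof. by rewrite fine_ge0 //; case/andP: (moment_integral_bounds k m). Qed.

Lemma le_mom k m k' m' :
  (forall x : R, 0 <= x <= 1 -> x ^+ k' * (1 - x) ^+ m' <= x ^+ k * (1 - x) ^+ m) ->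
  mom P k' m' <= mom P k m.
Proof.
move=> le_integrand; apply: fine_le; rewrite ?moment_integral_fin_num //.
apply: ge0_le_integral => //; try exact: measurable_moment_integrand.
by move=> x; rewrite /= in_itv => x01; rewrite lee_fin moment_integrand_ge0.
Qed.

Lemma mom_Sk_le k m : mom P k.+1 m <= mom P k m.
Proof.
apply: le_mom => x /[dup] x01 /andP[x0 x1].
by rewrite exprS -mulrA ler_piMl // moment_integrand_ge0.
Qed.

Lemma mom_Sm_le k m : mom P k m.+1 <= mom P k m.
Proof.
apply: le_mom => x /[dup] x01 /andP[x0 x1].
by rewrite exprS mulrCA ler_piMl ?moment_integrand_ge0 ?subr_ge0 // lerBlDr lerDl.
Qed.

Lemma pmean_ge0 k m : 0 <= pmean P k m.
Proof. by rewrite divr_ge0 // mom_ge0. Qed.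

Lemma pmean_le1 k m : pmean P k m <= 1.
Proof.
have [mom0|mom_neq0] := eqVneq (mom P k m) 0; first by rewrite /pmean mom0 invr0 mulr0.
have mom_gt0 : 0 < mom P k m by rewrite lt_neqAle eq_sym mom_neq0 mom_ge0.
by rewrite ler_pdivrMr // mul1r mom_Sk_le.
Qed.

Lemma pmean_itv k m : 0 <= pmean P k m <= 1.
Proof. by rewrite pmean_ge0 pmean_le1. Qed.

Lemma pmean_eq0_Sm k m : pmean P k m = 0 -> pmean P k m.+1 = 0.
Proof.
have mom_eq0 k' m' : mom P k' m' <= 0 -> mom P k' m' = 0.
  by move=> le0; apply/le_anti; rewrite le0 mom_ge0.
move=> /eqP; rewrite mulf_eq0 invr_eq0 => /orP[] /eqP mom0.
  by rewrite /pmean (mom_eq0 k.+1 m.+1) ?mul0r // -mom0 mom_Sm_le.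
have momS0 : mom P k.+1 m = 0 by apply: mom_eq0; rewrite -mom0 mom_Sk_le.
by rewrite /pmean (mom_eq0 k.+1 m.+1) ?mul0r // -momS0 mom_Sm_le.
Qed.

End Moments.

Section Suprema.
Context {R : realType}.
Implicit Types (S : set R) (x : R).

Lemma sup_attained S x : S x -> ubound S x -> sup S = x.
Proof.
move=> Sx ubx; apply/le_anti; rewrite ge_sup //=; last by exists x.
by apply: ub_le_sup => //; exists x.
Qed.

Lemma sup_eq_ub_of_lt S x : (forall y, y < x -> S y) -> ubound S x -> sup S = x.
Proof.
move=> S_lt ubx; apply/le_anti; rewrite ge_sup //=.
  by apply/unstable.ler_ltP => y /S_lt Sy; apply: ub_le_sup => //; exists x.
by exists (x - 1); apply: S_lt; rewrite ltrBlDr ltrDl.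
Qed.

End Suprema.

Section DiscountZero.
Context {R : realType} (P : probability R R).
Implicit Types (r : nat -> nat -> R) (s : stop_rule).

Lemma rule_value_discount0 r s k m :
  rule_value P 0 r s k m = if s [::] then 0 else r k m.
Proof.
apply: lim_near_cst; first exact: Rhausdorff.
exists 1%N => // -[//|n] _ /=.
by case: (s [::]) => //; rewrite mul0r addr0 !addn0.
Qed.

Lemma opt_value_discount0 r k m : opt_value P 0 r k m = Num.max 0 (r k m).
Proof.
apply: sup_attained => [|_ [s _ <-]]; last first.
  by rewrite rule_value_discount0; case: (s [::]); rewrite le_max lexx ?orbT.
rewrite /Num.max; case: ifP => _.
  by exists (fun=> false); rewrite // rule_value_discount0.
by exists (fun=> true); rewrite // rule_value_discount0.
Qed.

Lemma opt_value_play_discount0 r k m : opt_value_play P 0 r k m = r k m.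
Proof.
apply: sup_attained => [|_ [s /= s_play <-]]; last by rewrite rule_value_discount0 s_play.
by exists (fun=> false); rewrite // rule_value_discount0.
Qed.

Lemma gittins_discount0 k m : gittins P 0 k m = pmean P k m.
Proof.
apply: sup_attained => [|G]; rewrite /= opt_value_play_discount0 ?subrr //.
by rewrite subr_ge0.
Qed.

End DiscountZero.

Lemma convex_comb_le {R : numDomainType} {a X Y X' Y' : R} : 0 <= a <= 1 ->
  X <= X' -> Y <= Y' -> a * X + (1 - a) * Y <= a * X' + (1 - a) * Y'.
Proof.
by move=> /andP[a0 a1] leX leY; rewrite lerD // ler_wpM2l // subr_ge0.
Qed.

Lemma convex_comb_le_ub {R : numDomainType} {a X Y C : R} : 0 <= a <= 1 ->
  X <= C -> Y <= C -> a * X + (1 - a) * Y <= C.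
Proof.
move=> a01 XC YC; have := convex_comb_le a01 XC YC.
by rewrite -mulrDl subrKC mul1r.
Qed.

Section DiscountedGame.
Context {R : realType} (P : probability R R) (g : R).
Hypotheses (g_ge0 : 0 <= g) (g_lt1 : g < 1).
Implicit Types (r : nat -> nat -> R) (s : stop_rule).
Local Notation tv := (trunc_value P g).

Lemma trunc_valueS r s k0 m0 n h : tv r s k0 m0 n.+1 h =
  if s h then 0 else
  r (k0 + count id h)%N (m0 + count negb h)%N +
  g * (pmean P (k0 + count id h) (m0 + count negb h) * tv r s k0 m0 n (true :: h)
     + (1 - pmean P (k0 + count id h) (m0 + count negb h)) * tv r s k0 m0 n (false :: h)).
Proof. by []. Qed.

Lemma trunc_value_scale c r s k0 m0 n h :
  tv (fun k m => c * r k m) s k0 m0 n h = c * tv r s k0 m0 n h.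
Proof.
elim: n h => [|n IH] h /=; first by rewrite mulr0.
by case: (s h); rewrite ?mulr0 // !IH; ring.
Qed.

Lemma trunc_value_ub r s k0 m0 C : 0 <= C -> (forall k m, r k m + g * C <= C) ->
  forall n h, tv r s k0 m0 n h <= C.
Proof.
move=> C_ge0 rC; elim=> [|n IH] h //=; case: (s h) => //.
apply: le_trans (rC (k0 + count id h)%N (m0 + count negb h)%N); rewrite lerD2l.
by rewrite ler_wpM2l // convex_comb_le_ub ?pmean_itv.
Qed.

Lemma trunc_value_lb r s k0 m0 C : C <= 0 -> (forall k m, C <= r k m + g * C) ->
  forall n h, C <= tv r s k0 m0 n h.
Proof.
move=> C_le0 Cr n h; rewrite -lerN2 -mulN1r -trunc_value_scale.
apply: trunc_value_ub => [|k m]; first by rewrite oppr_ge0.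
by rewrite mulN1r mulrN -opprD lerN2.
Qed.

Lemma trunc_value_mono r r' s k0 m0 : (forall k m, r k m <= r' k m) ->
  forall n h, tv r s k0 m0 n h <= tv r' s k0 m0 n h.
Proof.
move=> le_r; elim=> [|n IH] h //=; case: (s h) => //.
by rewrite lerD // ler_wpM2l // convex_comb_le ?pmean_itv.
Qed.

Lemma trunc_value_increment r s k0 m0 B : 0 <= B -> (forall k m, r k m <= B) ->
  forall n h, tv r s k0 m0 n.+1 h - tv r s k0 m0 n h <= B * g ^+ n.
Proof.
move=> B_ge0 r_le; elim=> [|n IH] h.
  by rewrite /= ?expr0 mulr1 subr0; case: (s h); rewrite ?r_le // !(mulr0, addr0) r_le.
rewrite trunc_valueS [X in _ - X]trunc_valueS; case: (s h).
  by rewrite subrr mulr_ge0 // exprn_ge0.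
rewrite opprD addrACA subrr add0r -mulrBr exprS mulrCA ler_wpM2l //.
by rewrite opprD addrACA -!mulrBr convex_comb_le_ub ?pmean_itv.
Qed.

Definition bounded_reward r := exists B, forall k m, `|r k m| <= B.

Lemma bounded_reward_scale c {r} : bounded_reward r ->
  bounded_reward (fun k m => c * r k m).
Proof. by move=> [B r_le]; exists (`|c| * B) => k m; rewrite normrM ler_wpM2l. Qed.

(* The partial sums plus the geometric tail [C g^n] decrease, where
   [C = B / (1 - g)] bounds the value of any game. *)
Lemma cvg_trunc_value {r} s k0 m0 : bounded_reward r ->
  cvgn (fun n => tv r s k0 m0 n [::]).
Proof.
move=> [B r_le]; have B_ge0 : 0 <= B := le_trans (normr_ge0 _) (r_le 0%N 0%N).
have g1_gt0 : 0 < 1 - g by rewrite subr_gt0.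
set C := B / (1 - g); have C_ge0 : 0 <= C by rewrite divr_ge0 // ltW.
have CB : C * (1 - g) = B by rewrite mulfVK // gt_eqF.
set u := fun n => _; pose w n := u n + C * g ^+ n.
have w_noninc : nonincreasing_seq w.
  apply/nonincreasing_seqP => n; rewrite /w.
  have r_le' k m : r k m <= B := le_trans (ler_norm _) (r_le k m).
  have := @trunc_value_increment r s k0 m0 B B_ge0 r_le' n [::].
  have : C * g ^+ n.+1 + B * g ^+ n = C * g ^+ n by rewrite -CB exprS; ring.
  rewrite -/(u n.+1) -/(u n); lra.
have w_lb : has_lbound (range w).
  exists (- C) => _ [n _ <-]; rewrite -[- C]addr0 lerD ?(mulr_ge0 C_ge0) ?exprn_ge0 //.
  apply: trunc_value_lb => [|k m]; first by rewrite oppr_le0.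
  have : - B <= r k m by rewrite lerNl (le_trans _ (r_le k m)) // -normrN ler_norm.
  have : g * C = C - B by rewrite -CB; ring.
  rewrite mulrN; lra.
have -> : u = w - (fun n => C * g ^+ n) by apply/funext => i; rewrite /w /= addrK.
apply: is_cvgB; first exact: nonincreasing_is_cvgn.
by apply: cvgP; apply: cvg_geometric; rewrite ger0_norm.
Qed.

Lemma rule_value_le r s k0 m0 c : bounded_reward r ->
  (\forall n \near \oo, tv r s k0 m0 n [::] <= c) -> rule_value P g r s k0 m0 <= c.
Proof. by move=> r_bd; apply: limr_le; exact: cvg_trunc_value. Qed.

Lemma rule_value_ub r s k0 m0 C : bounded_reward r -> 0 <= C ->
  (forall k m, r k m + g * C <= C) -> rule_value P g r s k0 m0 <= C.
Proof.
by move=> r_bd C_ge0 rC; apply: rule_value_le => //; apply: nearW => n; exact: trunc_value_ub.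
Qed.

Lemma rule_value_mono {r r'} s k0 m0 : bounded_reward r -> bounded_reward r' ->
  (forall k m, r k m <= r' k m) -> rule_value P g r s k0 m0 <= rule_value P g r' s k0 m0.
Proof.
move=> r_bd r'_bd le_r; apply: ler_lim; try exact: cvg_trunc_value.
by apply: nearW => n; exact: trunc_value_mono.
Qed.

Lemma eq_rule_value r r' s s' k0 m0 :
  (forall n, tv r s k0 m0 n [::] = tv r' s' k0 m0 n [::]) ->
  rule_value P g r s k0 m0 = rule_value P g r' s' k0 m0.
Proof. by move=> eq_tv; rewrite /rule_value; under eq_fun do rewrite eq_tv. Qed.

Lemma rule_value_scale c r s k0 m0 : bounded_reward r ->
  rule_value P g (fun k m => c * r k m) s k0 m0 = c * rule_value P g r s k0 m0.
Proof.
move=> r_bd; rewrite /rule_value.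
under eq_fun do rewrite trunc_value_scale.
by rewrite limM //; [rewrite lim_cst | exact: is_cvg_cst | exact: cvg_trunc_value].
Qed.

Lemma rule_value_stop r s k0 m0 : s [::] -> rule_value P g r s k0 m0 = 0.
Proof.
move=> s_stop; apply: lim_near_cst; first exact: Rhausdorff.
by apply: nearW => -[|n] /=; rewrite ?s_stop.
Qed.

Definition play_once : stop_rule := fun h => h != [::].

Lemma rule_value_play_once r k0 m0 : rule_value P g r play_once k0 m0 = r k0 m0.
Proof.
apply: lim_near_cst; first exact: Rhausdorff.
exists 2%N => // -[|[|n]] //= _.
by rewrite !mulr0 addr0 mulr0 addr0 !addn0.
Qed.

Lemma rule_value_shift {r r'} s k0 m0 d : bounded_reward r -> bounded_reward r' ->
  ~~ s [::] -> (forall k m, r' k m <= r k m) -> r' k0 m0 <= r k0 m0 - d ->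
  rule_value P g r' s k0 m0 <= rule_value P g r s k0 m0 - d.
Proof.
move=> r_bd r'_bd /negbTE s_play le_r le_r0; rewrite lerBrDr.
have cvg_r' := cvg_trunc_value s k0 m0 r'_bd.
have -> : rule_value P g r' s k0 m0 + d = limn (fun n => tv r' s k0 m0 n [::] + d).
  by rewrite limD //; [rewrite lim_cst | exact: is_cvg_cst].
apply: ler_lim; [exact: is_cvgD cvg_r' (is_cvg_cst _) | exact: cvg_trunc_value |].
exists 1%N => // -[//|n] _ /=; rewrite s_play !addn0.
have : g * (pmean P k0 m0 * tv r' s k0 m0 n [:: true]
          + (1 - pmean P k0 m0) * tv r' s k0 m0 n [:: false])
    <= g * (pmean P k0 m0 * tv r s k0 m0 n [:: true]
          + (1 - pmean P k0 m0) * tv r s k0 m0 n [:: false]).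
  by rewrite ler_wpM2l // convex_comb_le ?pmean_itv ?trunc_value_mono.
lra.
Qed.

Lemma trunc_value_null_le0 r s k0 m0 : (forall k m, pmean P k m = 0 -> r k m <= 0) ->
  forall n h, pmean P (k0 + count id h) (m0 + count negb h) = 0 ->
  tv r s k0 m0 n h <= 0.
Proof.
move=> r_null; elim=> [|n IH] h p0 //=; case: (s h) => //.
rewrite p0 mul0r add0r subr0 mul1r -[0]addr0 lerD ?r_null // mulr_ge0_le0 // IH //=.
by rewrite add0n add1n addnS pmean_eq0_Sm.
Qed.

Lemma trunc_value_null_eq0 r s k0 m0 : (forall k m, pmean P k m = 0 -> r k m = 0) ->
  forall n h, pmean P (k0 + count id h) (m0 + count negb h) = 0 ->
  tv r s k0 m0 n h = 0.
Proof.
move=> r_null n h p0; apply/le_anti; rewrite trunc_value_null_le0 => [|k m /r_null ->//|//].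
rewrite -oppr_le0 -mulN1r -trunc_value_scale trunc_value_null_le0 // => k m /r_null ->.
by rewrite mulr0.
Qed.

Definition stop_at_null s k0 m0 : stop_rule := fun h =>
  s h || (pmean P (k0 + count id h) (m0 + count negb h) == 0).

(* Null states stay null on the branch of positive probability, so a reward
   vanishing on them only matters on non-null states. *)
Lemma trunc_value_stop_at_null r r' s k0 m0 :
  (forall k m, pmean P k m = 0 -> r k m = 0) ->
  (forall k m, pmean P k m != 0 -> r k m = r' k m) ->
  forall n h, tv r s k0 m0 n h = tv r' (stop_at_null s k0 m0) k0 m0 n h.
Proof.
move=> r_null r_r'; elim=> [|n IH] h //.
have [p0|p_neq0] := eqVneq (pmean P (k0 + count id h) (m0 + count negb h)) 0.
  by rewrite trunc_value_null_eq0 //= /stop_at_null p0 eqxx orbT.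
by rewrite /= /stop_at_null (negbTE p_neq0) orbF; case: (s h); rewrite // r_r' // !IH.
Qed.

Lemma has_ubound_rule_value r (A : set stop_rule) k m : bounded_reward r ->
  has_ubound [set rule_value P g r s k m | s in A].
Proof.
move=> [B r_le]; have B_ge0 : 0 <= B := le_trans (normr_ge0 _) (r_le 0%N 0%N).
have g1_gt0 : 0 < 1 - g by rewrite subr_gt0.
exists (B / (1 - g)) => _ [s _ <-].
apply: rule_value_ub; [by exists B | by rewrite divr_ge0 // ltW |].
move=> k' m'; rewrite -lerBrDr -[X in X - _]mul1r -mulrBl mulrC mulfVK ?gt_eqF //.
exact: le_trans (ler_norm _) (r_le k' m').
Qed.

Lemma le_opt_value {r} s k m : bounded_reward r ->
  rule_value P g r s k m <= opt_value P g r k m.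
Proof. by move=> r_bd; apply: ub_le_sup; [exact: has_ubound_rule_value | exists s]. Qed.

Lemma le_opt_value_play {r} s k m : bounded_reward r -> ~~ s [::] ->
  rule_value P g r s k m <= opt_value_play P g r k m.
Proof.
move=> r_bd /negbTE s_play.
by apply: ub_le_sup; [exact: has_ubound_rule_value | exists s].
Qed.

Lemma opt_value_play_le r k m c : (forall s, ~~ s [::] -> rule_value P g r s k m <= c) ->
  opt_value_play P g r k m <= c.
Proof.
move=> le_c; apply: ge_sup => [|_ [s /= s_play <-]]; last by rewrite le_c ?s_play.
by exists (rule_value P g r play_once k m), play_once.
Qed.

Definition net_reward G k m : R := pmean P k m - G.

Lemma bounded_net_reward G : bounded_reward (net_reward G).
Proof.
exists (1 + `|G|) => k m; apply: le_trans (ler_normB _ _) _.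
by rewrite lerD2r ger0_norm ?pmean_ge0 ?pmean_le1.
Qed.

Definition gittins_set k m := [set G : R | 0 <= opt_value_play P g (net_reward G) k m].

Lemma gittinsE k m : gittins P g k m = sup (gittins_set k m).
Proof. by []. Qed.

Lemma mean_in_gittins_set k m : gittins_set k m (pmean P k m).
Proof.
rewrite /gittins_set /=.
apply: le_trans (le_opt_value_play play_once k m (bounded_net_reward _) isT) => //.
by rewrite rule_value_play_once /net_reward subrr.
Qed.

Lemma gittins_set_le1 k m : ubound (gittins_set k m) 1.
Proof.
move=> G; apply: contraTT; rewrite -!ltNge => G_gt1.
have p_lt_G : pmean P k m < G by rewrite (le_lt_trans (pmean_le1 _ _ _)).
apply: le_lt_trans (_ : _ <= pmean P k m - G) _; last by rewrite subr_lt0.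
apply: opt_value_play_le => s s_play.
have zero_bd : bounded_reward (fun _ _ => 0) by exists 0 => *; rewrite normr0.
apply: le_trans
  (rule_value_shift s k m (G - pmean P k m) zero_bd (bounded_net_reward G) s_play _ _) _.
- by move=> k' m'; rewrite /net_reward subr_le0 ltW // (le_lt_trans (pmean_le1 _ _ _)).
- by rewrite /net_reward sub0r opprB.
by rewrite opprB gerDr rule_value_ub // => *; rewrite mulr0 addr0.
Qed.

Lemma has_sup_gittins_set k m : has_sup (gittins_set k m).
Proof.
by split; [exists (pmean P k m); exact: mean_in_gittins_set | exists 1; exact: gittins_set_le1].
Qed.

Lemma gittins_ge_mean k m : pmean P k m <= gittins P g k m.
Proof.
by apply: ub_le_sup; [case: (has_sup_gittins_set k m) | exact: mean_in_gittins_set].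
Qed.

Lemma gittins_mean0 k m : pmean P k m = 0 -> gittins P g k m = 0.
Proof.
move=> p0; apply: sup_attained; first by have := mean_in_gittins_set k m; rewrite p0.
move=> G; apply: contraTT; rewrite -!ltNge => G_gt0.
apply: le_lt_trans (_ : _ <= - G) _; last by rewrite oppr_lt0.
apply: opt_value_play_le => s /negbTE s_play.
apply: rule_value_le; first exact: bounded_net_reward.
exists 1%N => // -[//|n] _ /=; rewrite s_play !addn0 /net_reward p0.
rewrite sub0r mul0r add0r subr0 mul1r gerDl mulr_ge0_le0 // trunc_value_null_le0 //=.
  by move=> k' m' ->; rewrite sub0r oppr_le0 ltW.
by rewrite !addn0 addn1 pmean_eq0_Sm.
Qed.

Lemma opt_value_play_shift {G G'} k m : G <= G' ->
  opt_value_play P g (net_reward G') k m <= opt_value_play P g (net_reward G) k m - (G' - G).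
Proof.
move=> le_GG'; apply: opt_value_play_le => s s_play.
apply: le_trans (rule_value_shift s k m (G' - G)
  (bounded_net_reward G) (bounded_net_reward G') s_play _ _) _.
- by move=> k' m'; rewrite /net_reward lerB.
- by rewrite /net_reward opprB addrA subrK.
by rewrite lerD2r le_opt_value_play //; exact: bounded_net_reward.
Qed.

Lemma play_value_gt0_below_gittins G k m : G < gittins P g k m ->
  exists2 s, ~~ s [::] & 0 < rule_value P g (net_reward G) s k m.
Proof.
move=> /(sup_gt (ex_intro _ _ (mean_in_gittins_set k m))) [G' G'_in lt_GG'].
have : 0 < opt_value_play P g (net_reward G) k m.
  by have := opt_value_play_shift k m (ltW lt_GG'); rewrite /gittins_set /= in G'_in; lra.
case/sup_gt => [|_ [s /= s_play <-] value_gt0]; last by exists s; rewrite ?s_play.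
by exists (rule_value P g (net_reward G) play_once k m), play_once.
Qed.

Lemma play_value_lt0_above_gittins G k m s : gittins P g k m < G -> ~~ s [::] ->
  rule_value P g (net_reward G) s k m < 0.
Proof.
move=> lt_G s_play.
apply: le_lt_trans (le_opt_value_play s k m (bounded_net_reward G) s_play) _.
rewrite ltNge; apply/negP => G_in; move: lt_G; rewrite ltNge gittinsE.
by rewrite ub_le_sup //; case: (has_sup_gittins_set k m).
Qed.

Section Bidding.
Variable v : R.
Hypothesis v_gt0 : 0 < v.

Definition bid_gain ga W k m : R :=
  v * pmean P k m - W * Num.min 1 (pmean P k m / gittins P ga k m).

Lemma eff_bid_mean0 gb ga k m : pmean P k m = 0 ->
  eff_bid P v gb ga k m = v * gittins P g k m.
Proof.
move=> p0; rewrite gittins_mean0 // /eff_bid /bid_click /bid_impr p0 mul0r.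
by rewrite min_r // !mulr0 !mul0r maxxx.
Qed.

Lemma bid_index_myopic_bidder k m : 0 < pmean P k m ->
  bid_index P v 0 g k m = v * gittins P g k m.
Proof.
move=> p_gt0; have q_gt0 := lt_le_trans p_gt0 (gittins_ge_mean k m).
have gain_gt0 W : (0 < opt_value P 0 (bid_gain g W) k m) = (W < v * gittins P g k m).
  rewrite opt_value_discount0 lt_max ltxx /= /bid_gain min_r; last first.
    by rewrite ler_pdivrMr // mul1r gittins_ge_mean.
  by rewrite subr_gt0 mulrCA mulrC ltr_pM2r // ltr_pdivrMr.
by apply: sup_eq_ub_of_lt => W /=; rewrite gain_gt0 // => /ltW.
Qed.

Lemma eff_bid_myopic_bidder k m : 0 < pmean P k m ->
  eff_bid P v 0 g k m = v * gittins P g k m.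
Proof.
move=> p_gt0; have q_gt0 := lt_le_trans p_gt0 (gittins_ge_mean k m).
rewrite /eff_bid /bid_click /bid_impr bid_index_myopic_bidder // min_r; last first.
  by rewrite ler_pdivrMr // mul1r gittins_ge_mean.
have -> : v * gittins P g k m * (pmean P k m / gittins P g k m) = v * pmean P k m.
  by field; rewrite gt_eqF.
by rewrite mulfK ?gt_eqF // max_r // ler_pM2l ?gittins_ge_mean.
Qed.

(* With [ga = 0] the auctioneer's index is the mean, and [p / p] is [0] on a
   null state: there the gain is [0] rather than [- W]. *)
Lemma bid_gain_null W k m : pmean P k m = 0 -> bid_gain 0 W k m = 0.
Proof.
by move=> p0; rewrite /bid_gain gittins_discount0 p0 mulr0 mul0r min_r // mulr0 subrr.
Qed.

Lemma bid_gain_nonnull W k m : pmean P k m != 0 ->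
  bid_gain 0 W k m = v * net_reward (W / v) k m.
Proof.
move=> p_neq0; rewrite /bid_gain gittins_discount0 divff // minxx mulr1.
by rewrite /net_reward mulrBr [v * (W / v)]mulrC divfK ?gt_eqF.
Qed.

Lemma bounded_bid_gain W : bounded_reward (bid_gain 0 W).
Proof.
have [B net_le] := bounded_reward_scale v (bounded_net_reward (W / v)).
exists (Num.max 0 B) => k m; have [p0|p_neq0] := eqVneq (pmean P k m) 0.
  by rewrite bid_gain_null // normr0 le_max lexx.
by rewrite bid_gain_nonnull // le_max net_le orbT.
Qed.

Lemma opt_bid_gain_gt0 W k m : 0 < pmean P k m -> W < v * gittins P g k m ->
  0 < opt_value P g (bid_gain 0 W) k m.
Proof.
move=> p_gt0 lt_W; have [W_lt0|W_ge0] := ltP W 0.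
  apply: lt_le_trans (le_opt_value play_once k m (bounded_bid_gain W)).
  rewrite rule_value_play_once bid_gain_nonnull ?gt_eqF // pmulr_rgt0 // subr_gt0.
  by rewrite (lt_trans _ p_gt0) // pmulr_llt0 ?invr_gt0.
have [s s_play value_gt0] : exists2 s, ~~ s [::] &
    0 < rule_value P g (net_reward (W / v)) s k m.
  by apply: play_value_gt0_below_gittins; rewrite ltr_pdivrMr // mulrC.
apply: lt_le_trans (le_opt_value s k m (bounded_bid_gain W)).
apply: lt_le_trans (rule_value_mono s k m
  (bounded_reward_scale v (bounded_net_reward (W / v))) (bounded_bid_gain W) _).
  by rewrite rule_value_scale ?pmulr_rgt0 //; exact: bounded_net_reward.
move=> k' m'; have [p0|p_neq0] := eqVneq (pmean P k' m') 0; last by rewrite bid_gain_nonnull.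
by rewrite bid_gain_null // /net_reward p0 sub0r mulrN mulrCA mulfV ?gt_eqF // mulr1 oppr_le0.
Qed.

Lemma opt_bid_gain_le0 W k m : 0 < pmean P k m -> v * gittins P g k m < W ->
  opt_value P g (bid_gain 0 W) k m <= 0.
Proof.
move=> p_gt0 gt_W; apply: ge_sup => [|_ [s _ <-]].
  by exists (rule_value P g (bid_gain 0 W) play_once k m), play_once.
have [s_stop|s_play] := boolP (s [::]); first by rewrite rule_value_stop.
rewrite (@eq_rule_value _ (fun k m => v * net_reward (W / v) k m) _ (stop_at_null s k m)).
  rewrite rule_value_scale; last exact: bounded_net_reward.
  apply/mulr_ge0_le0/ltW; first exact: ltW.
  apply: play_value_lt0_above_gittins; first by rewrite ltr_pdivlMr // mulrC.
  by rewrite /stop_at_null negb_or s_play !addn0 gt_eqF.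
move=> n; apply: trunc_value_stop_at_null => k' m'.
  exact: bid_gain_null.
exact: bid_gain_nonnull.
Qed.

Lemma bid_index_myopic_auctioneer k m : 0 < pmean P k m ->
  bid_index P v g 0 k m = v * gittins P g k m.
Proof.
move=> p_gt0; apply: sup_eq_ub_of_lt => W /=.
  by move=> lt_W; apply: opt_bid_gain_gt0.
move=> opt_gt0; rewrite leNgt; apply/negP => /(opt_bid_gain_le0 W k m p_gt0).
by rewrite leNgt opt_gt0.
Qed.

Lemma eff_bid_myopic_auctioneer k m : 0 < pmean P k m ->
  eff_bid P v g 0 k m = v * gittins P g k m.
Proof.
move=> p_gt0; rewrite /eff_bid /bid_click /bid_impr bid_index_myopic_auctioneer //.
by rewrite gittins_discount0 divff ?gt_eqF // minxx mulr1 divfK ?gt_eqF // maxxx.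
Qed.

End Bidding.
End DiscountedGame.

Lemma eff_bid_socially_optimal (R : realType) (P : probability R R) (gamma gb ga v : R) k m :
  0 <= gamma < 1 -> 0 < v -> (gb = gamma /\ ga = 0) \/ (gb = 0 /\ ga = gamma) ->
  eff_bid P v gb ga k m = v * gittins P gamma k m.
Proof.
move=> /andP[gamma_ge0 gamma_lt1] v_gt0 cases.
have [p0|p_neq0] := eqVneq (pmean P k m) 0; first exact: eff_bid_mean0.
have p_gt0 : 0 < pmean P k m by rewrite lt_neqAle eq_sym p_neq0 pmean_ge0.
case: cases => -[-> ->]; first exact: eff_bid_myopic_auctioneer.
exact: eff_bid_myopic_bidder.
Qed.

Theorem theorem5 (R : realType) (n : nat) (gamma gb ga : R)
  (Pr : 'I_n -> probability R R) (v : 'I_n -> R) (k m : 'I_n -> nat) :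
  0 <= gamma < 1 ->
  (forall j, Pr j (~` `[0, 1]) = 0%E) ->
  (forall j, 0 < v j) ->
  (forall j, 0 < mom (Pr j) (k j) (m j)) ->
  ((gb = gamma /\ ga = 0) \/ (gb = 0 /\ ga = gamma)) ->
  (forall j, eff_bid (Pr j) (v j) gb ga (k j) (m j)
             = v j * gittins (Pr j) gamma (k j) (m j)) /\
  (forall j, (forall i, eff_bid (Pr i) (v i) gb ga (k i) (m i)
                        <= eff_bid (Pr j) (v j) gb ga (k j) (m j)) <->
             (forall i, v i * gittins (Pr i) gamma (k i) (m i)
                        <= v j * gittins (Pr j) gamma (k j) (m j))).
Proof.
move=> gamma01 _ v_gt0 _ cases.
have eff_bidE j : eff_bid (Pr j) (v j) gb ga (k j) (m j)
                  = v j * gittins (Pr j) gamma (k j) (m j).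
  exact: eff_bid_socially_optimal.
by split => // j; split => le_j i; [rewrite -!eff_bidE | rewrite !eff_bidE].
Qed.
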